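(* Let $A:\mathscr T\to\mathscr U$ and $B:\mathscr S\to\mathscr U$ be morphisms of $\mathscr J$-theories. Then $A$ and $B$ commute if and only if $A_{JI}:\mathscr T(J,I)\to\mathscr U(J,I)$ commutes with $B_{KI}:\mathscr S(K,I)\to\mathscr U(K,I)$ for all objects $J,K$ of $\mathscr J$.
   Context: $(\mathscr V,\otimes,I)$ is a closed symmetric monoidal category, $\underline{\mathscr V}$ the associated $\mathscr V$-category; everything is $\mathscr V$-enriched. A system of arities is a full sub-$\mathscr V$-category $\mathscr J\hookrightarrow\underline{\mathscr V}$ containing $I$ and closed under $\otimes$. A cotensor $[V,C]$ is an object with counit $V\to\mathscr C([V,C],C)$ inducing $\mathscr C(-,[V,C])\cong\underline{\mathscr V}(V,\mathscr C(-,C))$. A $\mathscr J$-theory is a $\mathscr V$-category $\mathscr T$ with $\mathrm{ob}\,\mathscr T=\mathrm{ob}\,\mathscr J$ and an identity-on-objects $\tau:\mathscr J^{\mathrm{op}}\to\mathscr T$ preserving cotensors by objects of $\mathscr J$. A morphism of $\mathscr J$-theories $(\mathscr T,\tau)\to(\mathscr U,\upsilon)$ is a $\mathscr V$-functor $A$ with $A\tau=\upsilon$. In $(\mathscr U,\upsilon)$, $J\otimes K$ is a cotensor of $K$ by $J$ with counit $J\xrightarrow{\mathrm{Coev}}\underline{\mathscr V}(K,J\otimes K)=\mathscr J^{\mathrm{op}}(J\otimes K,K)\xrightarrow{\upsilon}\mathscr U(J\otimes K,K)$ and $K\otimes J$ is a cotensor of $K$ by $J$ with counit $J\xrightarrow{\mathrm{Coev}'}\underline{\mathscr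 V}(K,K\otimes J)\xrightarrow{\upsilon}\mathscr U(K\otimes J,K)$ ($\mathrm{Coev}'$ = coevaluation composed with the symmetry); these induce $\mathscr V$-functors $[J,-]_\ell,[J,-]_r:\mathscr U\to\mathscr U$ ($K\mapsto J\otimes K$, $K\mapsto K\otimes J$) making the counits $\mathscr V$-natural. The first and second Kronecker products $\mathsf k,\tilde{\mathsf k}:\mathscr U(J,J')\otimes\mathscr U(K,K')\to\mathscr U(J\otimes K,J'\otimes K')$ are the composites of $[K,-]_r\otimes[J',-]_\ell$ (into $\mathscr U(J\otimes K,J'\otimes K)\otimes\mathscr U(J'\otimes K,J'\otimes K')$) with composition, resp. of $[K',-]_r\otimes[J,-]_\ell$ (into $\mathscr U(J\otimes K',J'\otimes K')\otimes\mathscr U(J\otimes K,J\otimes K')$) with composition. Morphisms $\mu:V\to\mathscr U(J,J')$, $\nu:W\to\mathscr U(K,K')$ in $\mathscr V$ commute if $\mathsf k(\mu\otimes\nu)=\tilde{\mathsf k}(\mu\otimes\nu)$. $A$ and $B$ commute if $A_{JJ'}$ commutes with $B_{KK'}$ for all $J,J',K,K'\in\mathscr J$. *)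

Set Implicit Arguments.
Unset Strict Implicit.

Record SMCC := {
  ob : Type;
  hom : ob -> ob -> Type;
  cmp : forall a b c, hom b c -> hom a b -> hom a c;
  idm : forall a, hom a a;
  cmp_idl : forall a b (f : hom a b), cmp (idm b) f = f;
  cmp_idr : forall a b (f : hom a b), cmp f (idm a) = f;
  cmp_assoc : forall a b c d (f : hom a b) (g : hom b c) (h : hom c d),
      cmp h (cmp g f) = cmp (cmp h g) f;
  ten : ob -> ob -> ob;
  tenm : forall a b c d, hom a b -> hom c d -> hom (ten a c) (ten b d);
  tenm_id : forall a b, tenm (idm a) (idm b) = idm (ten a b);
  tenm_cmp : forall a b c a' b' c' (f : hom a b) (g : hom b c)
      (f' : hom a' b') (g' : hom b' c'),
      tenm (cmp g f) (cmp g' f') = cmp (tenm g g') (tenm f f');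
  unt : ob;
  asc : forall a b c, hom (ten (ten a b) c) (ten a (ten b c));
  asci : forall a b c, hom (ten a (ten b c)) (ten (ten a b) c);
  asc_iso1 : forall a b c, cmp (asci a b c) (asc a b c) = idm _;
  asc_iso2 : forall a b c, cmp (asc a b c) (asci a b c) = idm _;
  asc_nat : forall a b c a' b' c' (f : hom a a') (g : hom b b') (h : hom c c'),
      cmp (asc a' b' c') (tenm (tenm f g) h) = cmp (tenm f (tenm g h)) (asc a b c);
  lu : forall a, hom (ten unt a) a;
  lui : forall a, hom a (ten unt a);
  lu_iso1 : forall a, cmp (lui a) (lu a) = idm _;
  lu_iso2 : forall a, cmp (lu a) (lui a) = idm _;
  lu_nat : forall a b (f : hom a b), cmp f (lu a) = cmp (lu b) (tenm (idm unt) f);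
  ru : forall a, hom (ten a unt) a;
  rui : forall a, hom a (ten a unt);
  ru_iso1 : forall a, cmp (rui a) (ru a) = idm _;
  ru_iso2 : forall a, cmp (ru a) (rui a) = idm _;
  ru_nat : forall a b (f : hom a b), cmp f (ru a) = cmp (ru b) (tenm f (idm unt));
  sy : forall a b, hom (ten a b) (ten b a);
  sy_inv : forall a b, cmp (sy b a) (sy a b) = idm _;
  sy_nat : forall a b c d (f : hom a b) (g : hom c d),
      cmp (sy b d) (tenm f g) = cmp (tenm g f) (sy a c);
  pentagon : forall a b c d,
      cmp (asc a b (ten c d)) (asc (ten a b) c d)
      = cmp (tenm (idm a) (asc b c d)) (cmp (asc a (ten b c) d) (tenm (asc a b c) (idm d)));
  triangle : forall a b,
      cmp (tenm (idm a) (lu b)) (asc a unt b) = tenm (ru a) (idm b);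
  hexagon : forall a b c,
      cmp (asc b c a) (cmp (sy a (ten b c)) (asc a b c))
      = cmp (tenm (idm b) (sy a c)) (cmp (asc b a c) (tenm (sy a b) (idm c)));
  ihom : ob -> ob -> ob;
  ev : forall a b, hom (ten (ihom a b) a) b;
  cur : forall c a b, hom (ten c a) b -> hom c (ihom a b);
  ev_cur : forall c a b (f : hom (ten c a) b),
      cmp (ev a b) (tenm (cur f) (idm a)) = f;
  cur_ev : forall c a b (g : hom c (ihom a b)),
      cur (cmp (ev a b) (tenm g (idm a))) = g
}.

Arguments hom {s}.
Arguments cmp {s a b c}.
Arguments idm {s}.
Arguments ten {s}.
Arguments tenm {s a b c d}.
Arguments unt {s}.
Arguments asc {s}.
Arguments lu {s}.
Arguments ru {s}.
Arguments sy {s}.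
Arguments ihom {s}.
Arguments ev {s}.
Arguments cur {s c a b}.

Definition is_iso (V : SMCC) (a b : ob V) (f : hom a b) : Prop :=
  exists g : hom b a, cmp g f = idm a /\ cmp f g = idm b.

Record VCatD (V : SMCC) := {
  vob : Type;
  vh : vob -> vob -> ob V;
  vc : forall a b c, hom (ten (vh b c) (vh a b)) (vh a c);
  vi : forall a, hom unt (vh a a)
}.
Arguments vob {V}.
Arguments vh {V} _ _ _.
Arguments vc {V} _ _ _ _.
Arguments vi {V} _ _.

Definition is_VCat (V : SMCC) (C : VCatD V) : Prop :=
  (forall a b c d,
     cmp (vc C a b d) (tenm (vc C b c d) (idm (vh C a b)))
     = cmp (vc C a c d) (cmp (tenm (idm (vh C c d)) (vc C a b c))
                             (asc (vh C c d) (vh C b c) (vh C a b))))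
  /\ (forall a b, cmp (vc C a b b) (tenm (vi C b) (idm (vh C a b))) = lu (vh C a b))
  /\ (forall a b, cmp (vc C a a b) (tenm (idm (vh C a b)) (vi C a)) = ru (vh C a b)).

Definition is_VFunctor (V : SMCC) (C D : VCatD V) (F : vob C -> vob D)
    (FF : forall a b, hom (vh C a b) (vh D (F a) (F b))) : Prop :=
  (forall a b c, cmp (FF a c) (vc C a b c)
                 = cmp (vc D (F a) (F b) (F c)) (tenm (FF b c) (FF a b)))
  /\ (forall a, cmp (FF a a) (vi C a) = vi D (F a)).

Definition opD (V : SMCC) (C : VCatD V) : VCatD V :=
  {| vob := vob C;
     vh := fun a b => vh C b a;
     vc := fun a b c => cmp (vc C c b a) (sy (vh C c b) (vh C b a));
     vi := fun a => vi C a |}.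

Definition uvc (V : SMCC) (a b c : ob V) :
    hom (ten (ihom b c) (ihom a b)) (ihom a c) :=
  cur (cmp (ev b c) (cmp (tenm (idm (ihom b c)) (ev a b)) (asc (ihom b c) (ihom a b) a))).
Definition uvi (V : SMCC) (a : ob V) : hom unt (ihom a a) := cur (lu a).

(* cotensors: e : v -> C(d,c) is the counit exhibiting d as [v,c] *)
Definition cotmap (V : SMCC) (C : VCatD V) (v : ob V) (c d : vob C)
    (e : hom v (vh C d c)) (x : vob C) : hom (vh C x d) (ihom v (vh C x c)) :=
  cur (cmp (vc C x d c) (cmp (sy (vh C x d) (vh C d c)) (tenm (idm (vh C x d)) e))).

Definition is_cotensor (V : SMCC) (C : VCatD V) (v : ob V) (c d : vob C)
    (e : hom v (vh C d c)) : Prop :=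
  forall x, is_iso (cotmap e x).

(* The morphism C(c,c') -> C(d,d') induced by cotensors (d,e) = [v,c] and
   (d',e') = [v,c'] : it is the (unique, as cotmap is invertible) L with
   cotmap e' d o L = curry( C(c,c') (x) v --1(x)e--> C(c,c') (x) C(d,c) --comp--> C(d,c') ). *)
Definition induced (V : SMCC) (C : VCatD V) (v : ob V) (c d : vob C)
    (e : hom v (vh C d c)) (c' d' : vob C) (e' : hom v (vh C d' c'))
    (L : hom (vh C c c') (vh C d d')) : Prop :=
  cmp (cotmap e' d) L = cur (cmp (vc C d c c') (tenm (idm (vh C c c')) e)).

Record Arities (V : SMCC) := {
  ar : ob V -> Prop;
  ar_unit : ar unt;
  ar_ten : forall x y, ar x -> ar y -> ar (ten x y)
}.

Section Arity.
Variables (V : SMCC) (Jr : Arities V).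

Definition Job : Type := {x : ob V | ar Jr x}.
Definition jI : Job := exist _ unt (ar_unit Jr).
Definition jten (a b : Job) : Job :=
  exist _ (ten (proj1_sig a) (proj1_sig b))
        (ar_ten (proj2_sig a) (proj2_sig b)).

(* J as a full sub-V-category of underline V, and its opposite *)
Definition JD : VCatD V :=
  {| vob := Job;
     vh := fun a b => ihom (proj1_sig a) (proj1_sig b);
     vc := fun a b c => uvc (proj1_sig a) (proj1_sig b) (proj1_sig c);
     vi := fun a => uvi (proj1_sig a) |}.
Definition Jop : VCatD V := opD JD.

Definition mkD (h : Job -> Job -> ob V)
    (c : forall a b c, hom (ten (h b c) (h a b)) (h a c))
    (i : forall a, hom unt (h a a)) : VCatD V :=
  {| vob := Job; vh := h; vc := c; vi := i |}.

Record JTheory := {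
  thh : Job -> Job -> ob V;
  thc : forall a b c, hom (ten (thh b c) (thh a b)) (thh a c);
  thi : forall a, hom unt (thh a a);
  tau : forall a b, hom (vh Jop a b) (thh a b);
  th_vcat : is_VCat (mkD thc thi);
  th_tau_fun : @is_VFunctor V Jop (mkD thc thi) (fun x => x) tau;
  th_tau_cot : forall (v c d : Job) (e : hom (proj1_sig v) (vh Jop d c)),
      @is_cotensor V Jop (proj1_sig v) c d e ->
      @is_cotensor V (mkD thc thi) (proj1_sig v) c d (cmp (tau d c) e)
}.

Definition thD (T : JTheory) : VCatD V := mkD (thc T) (thi T).

Record JMor (T U : JTheory) := {
  mor : forall a b, hom (thh T a b) (thh U a b);
  mor_fun : @is_VFunctor V (thD T) (thD U) (fun x => x) mor;
  mor_tau : forall a b, cmp (mor a b) (tau T a b) = tau U a b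
}.

Section Kron.
Variable U : JTheory.

(* counit  J --Coev--> [K, J(x)K] = Jop(J(x)K, K) --tau--> U(J(x)K, K) *)
Definition cl (j K : Job) : hom (proj1_sig j) (thh U (jten j K) K) :=
  cmp (tau U (jten j K) K) (cur (idm (ten (proj1_sig j) (proj1_sig K)))).
(* counit  J --Coev'--> [K, K(x)J] = Jop(K(x)J, K) --tau--> U(K(x)J, K) *)
Definition cr (j K : Job) : hom (proj1_sig j) (thh U (jten K j) K) :=
  cmp (tau U (jten K j) K) (cur (sy (proj1_sig j) (proj1_sig K))).

(* L is the action of [j,-]_l  on U(K,K'),  resp. of [j,-]_r *)
Definition lift_l (j K K' : Job)
    (L : hom (thh U K K') (thh U (jten j K) (jten j K'))) : Prop :=
  @induced V (thD U) (proj1_sig j) K (jten j K) (cl j K) K' (jten j K') (cl j K') L.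
Definition lift_r (j K K' : Job)
    (L : hom (thh U K K') (thh U (jten K j) (jten K' j))) : Prop :=
  @induced V (thD U) (proj1_sig j) K (jten K j) (cr j K) K' (jten K' j) (cr j K') L.

(* mu : X -> U(J,J') and nu : Y -> U(K,K') commute:
   k (mu (x) nu) = k~ (mu (x) nu), where k, k~ are built from the
   (uniquely determined) induced maps [K,-]_r, [J',-]_l, [K',-]_r, [J,-]_l. *)
Definition commutes (X Y : ob V) (J J' K K' : Job)
    (mu : hom X (thh U J J')) (nu : hom Y (thh U K K')) : Prop :=
  forall (Lr : hom (thh U J J') (thh U (jten J K) (jten J' K)))
         (Ll : hom (thh U K K') (thh U (jten J' K) (jten J' K')))
         (Lr' : hom (thh U J J') (thh U (jten J K') (jten J' K')))
         (Ll' : hom (thh U K K') (thh U (jten J K) (jten J K'))),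
    @lift_r K J J' Lr -> @lift_l J' K K' Ll ->
    @lift_r K' J J' Lr' -> @lift_l J K K' Ll' ->
    cmp (cmp (thc U (jten J K) (jten J' K) (jten J' K'))
             (cmp (sy _ _) (tenm Lr Ll)))
        (tenm mu nu)
    = cmp (cmp (thc U (jten J K) (jten J K') (jten J' K')) (tenm Lr' Ll'))
          (tenm mu nu).
End Kron.

Definition mor_commute (T S U : JTheory) (A : JMor T U) (B : JMor S U) : Prop :=
  forall J J' K K' : Job,
    @commutes U (thh T J J') (thh S K K') J J' K K' (mor A J J') (mor B K K').

End Arity.

(* In every J-theory U the arity J' is the cotensor [J', I], with counit
   eta_J' : J' -> U(J', I) coming from the right unitor; so a generalized
   morphism mu : X -> U(J, J') is determined by eta_J' . mu : J' (x) X -> U(J, I).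
   Composing both Kronecker products k(mu (x) nu) and k~(mu (x) nu) with the
   jointly monic counit that exhibits J' (x) K' as an iterated cotensor of I
   rewrites the commutation of mu and nu as an equation that, up to fixed
   isomorphisms, is the commutation of eta_J' . mu and eta_K' . nu.  For a
   morphism of theories, eta_J' . A_JJ' is A_JI precomposed with a map (since
   A preserves tau), and commutation is stable under precomposition. *)
Set Implicit Arguments.
Unset Strict Implicit.

Local Infix "∘" := cmp (at level 60, right associativity).
Local Infix "⊗" := tenm (at level 35).
Ltac lassoc := repeat rewrite <- cmp_assoc.

Section MonoidalCoherence.
Variable V : SMCC.

Lemma precmp_eq (b c d : ob V) (f : hom c d) (g : hom b c) (h : hom b d) :
  f ∘ g = h -> forall z (k : hom z b), f ∘ (g ∘ k) = h ∘ k.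
Proof. intros E z k. rewrite cmp_assoc, E. reflexivity. Qed.

Lemma precmp_eq2 (b c d x : ob V) (f : hom c d) (g : hom b c) (h : hom x d) (i : hom b x) :
  f ∘ g = h ∘ i -> forall z (k : hom z b), f ∘ (g ∘ k) = h ∘ (i ∘ k).
Proof. intros E z k. rewrite !cmp_assoc, E. reflexivity. Qed.

Lemma precmp_eq3 (b c d e x : ob V) (f : hom d e) (g : hom c d) (h : hom b c)
    (p : hom x e) (q : hom b x) :
  f ∘ g ∘ h = p ∘ q -> forall z (k : hom z b), f ∘ (g ∘ (h ∘ k)) = p ∘ (q ∘ k).
Proof. intros E z k. rewrite !cmp_assoc, <- (cmp_assoc h g f), E. reflexivity. Qed.

Lemma tenm_cmp_l (a b c d : ob V) (f : hom a b) (g : hom b c) :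
  (g ∘ f) ⊗ idm d = (g ⊗ idm d) ∘ (f ⊗ idm d).
Proof. rewrite <- tenm_cmp, cmp_idl. reflexivity. Qed.

Lemma tenm_cmp_r (a b c d : ob V) (f : hom a b) (g : hom b c) :
  idm d ⊗ (g ∘ f) = (idm d ⊗ g) ∘ (idm d ⊗ f).
Proof. rewrite <- tenm_cmp, cmp_idl. reflexivity. Qed.

Lemma tenm_lr (a b c d : ob V) (f : hom a b) (g : hom c d) :
  f ⊗ g = (f ⊗ idm d) ∘ (idm a ⊗ g).
Proof. rewrite <- tenm_cmp, cmp_idl, cmp_idr. reflexivity. Qed.

Lemma tenm_rl (a b c d : ob V) (f : hom a b) (g : hom c d) :
  f ⊗ g = (idm b ⊗ g) ∘ (f ⊗ idm c).
Proof. rewrite <- tenm_cmp, cmp_idl, cmp_idr. reflexivity. Qed.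

Lemma tenm_interchange (a b c d : ob V) (f : hom a b) (g : hom c d) :
  (f ⊗ idm d) ∘ (idm a ⊗ g) = (idm b ⊗ g) ∘ (f ⊗ idm c).
Proof. rewrite <- tenm_lr, <- tenm_rl. reflexivity. Qed.

Lemma ascK (a b c z : ob V) (k : hom z (ten (ten a b) c)) : asci a b c ∘ (asc a b c ∘ k) = k.
Proof. rewrite cmp_assoc, asc_iso1, cmp_idl. reflexivity. Qed.

Lemma asciK (a b c z : ob V) (k : hom z (ten a (ten b c))) : asc a b c ∘ (asci a b c ∘ k) = k.
Proof. rewrite cmp_assoc, asc_iso2, cmp_idl. reflexivity. Qed.

Lemma syK (a b z : ob V) (k : hom z (ten a b)) : sy b a ∘ (sy a b ∘ k) = k.
Proof. rewrite cmp_assoc, sy_inv, cmp_idl. reflexivity. Qed.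

Lemma sy_tenm_lK (a b c z : ob V) (k : hom z (ten (ten a b) c)) :
  (sy b a ⊗ idm c) ∘ ((sy a b ⊗ idm c) ∘ k) = k.
Proof. rewrite cmp_assoc, <- tenm_cmp, sy_inv, cmp_idl, tenm_id, cmp_idl. reflexivity. Qed.

Lemma sy_tenm_rK (a b c z : ob V) (k : hom z (ten c (ten a b))) :
  (idm c ⊗ sy b a) ∘ ((idm c ⊗ sy a b) ∘ k) = k.
Proof. rewrite cmp_assoc, <- tenm_cmp, sy_inv, cmp_idl, tenm_id, cmp_idl. reflexivity. Qed.

Lemma asci_nat (a b c a' b' c' : ob V) (f : hom a a') (g : hom b b') (h : hom c c') :
  asci a' b' c' ∘ (f ⊗ (g ⊗ h)) = ((f ⊗ g) ⊗ h) ∘ asci a b c.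
Proof.
  transitivity (asci a' b' c' ∘ (f ⊗ (g ⊗ h)) ∘ asc a b c ∘ asci a b c).
  - rewrite asc_iso2, cmp_idr. reflexivity.
  - rewrite <- (precmp_eq2 (asc_nat f g h)), cmp_assoc, asc_iso1, cmp_idl. reflexivity.
Qed.

Lemma tenm_unt_inj (a b : ob V) (f g : hom a b) : f ⊗ idm unt = g ⊗ idm unt -> f = g.
Proof.
  intro E.
  assert (Hru : forall h : hom a b, h = ru b ∘ (h ⊗ idm unt) ∘ rui a).
  { intro h. rewrite cmp_assoc, <- ru_nat, <- cmp_assoc, ru_iso2, cmp_idr. reflexivity. }
  rewrite (Hru f), (Hru g), E. reflexivity.
Qed.

(* Kelly's coherence lemma for the right unitor, derived from the pentagon and
   the triangle after tensoring with the unit. *)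
Lemma kelly_ru (a b : ob V) : (idm a ⊗ ru b) ∘ asc a b unt = ru (ten a b).
Proof.
  apply tenm_unt_inj.
  rewrite <- triangle, <- tenm_id.
  transitivity (asci a b unt ∘ (asc a b unt ∘ ((idm a ⊗ idm b) ⊗ lu unt))
                ∘ asc (ten a b) unt unt).
  2: { rewrite !cmp_assoc, asc_iso1, cmp_idl. reflexivity. }
  rewrite asc_nat. lassoc. rewrite pentagon.
  rewrite (precmp_eq (eq_sym (tenm_cmp_r _ _ _))), triangle.
  rewrite <- (precmp_eq2 (asc_nat _ _ _)), cmp_assoc, asc_iso1, cmp_idl.
  rewrite <- tenm_cmp, cmp_idl. reflexivity.
Qed.

Lemma sy_ten_r (u v w : ob V) : sy u (ten v w) =
  asci v w u ∘ (idm v ⊗ sy u w) ∘ asc v u w ∘ (sy u v ⊗ idm w) ∘ asci u v w.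
Proof.
  transitivity (asci v w u ∘ (asc v w u ∘ sy u (ten v w) ∘ asc u v w) ∘ asci u v w).
  - lassoc. rewrite ascK, asc_iso2, cmp_idr. reflexivity.
  - rewrite hexagon. lassoc. reflexivity.
Qed.

Lemma sy_ten_l (u v w : ob V) : sy (ten u v) w =
  asc w u v ∘ (sy u w ⊗ idm v) ∘ asci u w v ∘ (idm u ⊗ sy v w) ∘ asc u v w.
Proof.
  set (X := asc w u v ∘ (sy u w ⊗ idm v) ∘ asci u w v ∘ (idm u ⊗ sy v w) ∘ asc u v w).
  transitivity (X ∘ (sy w (ten u v) ∘ sy (ten u v) w)).
  2: { rewrite sy_inv, cmp_idr. reflexivity. }
  rewrite cmp_assoc.
  replace (X ∘ sy w (ten u v)) with (idm (ten w (ten u v))).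
  { rewrite cmp_idl. reflexivity. }
  unfold X. rewrite sy_ten_r. lassoc.
  rewrite asciK, sy_tenm_rK, ascK, sy_tenm_lK, asc_iso2. reflexivity.
Qed.

Lemma pentagon_asci (a b c d : ob V) :
  (asci a b c ⊗ idm d) ∘ asci a (ten b c) d ∘ (idm a ⊗ asci b c d)
  = asci (ten a b) c d ∘ asci a b (ten c d).
Proof.
  set (L := (asci a b c ⊗ idm d) ∘ asci a (ten b c) d ∘ (idm a ⊗ asci b c d)).
  transitivity (L ∘ ((asc a b (ten c d) ∘ asc (ten a b) c d)
                     ∘ (asci (ten a b) c d ∘ asci a b (ten c d)))).
  - lassoc. rewrite asciK, asc_iso2, cmp_idr. reflexivity.
  - rewrite pentagon. unfold L. lassoc.
    rewrite (precmp_eq (eq_sym (tenm_cmp_r _ _ _))), asc_iso1, tenm_id, cmp_idl, ascK.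
    rewrite (precmp_eq (eq_sym (tenm_cmp_l _ _ _))), asc_iso1, tenm_id, cmp_idl. reflexivity.
Qed.

Lemma pentagon_asc_asci (b a y x : ob V) :
  (asc b a y ⊗ idm x) ∘ asci (ten b a) y x
  = asci b (ten a y) x ∘ (idm b ⊗ asci a y x) ∘ asc b a (ten y x).
Proof.
  transitivity (asci b (ten a y) x ∘ (idm b ⊗ asci a y x)
                ∘ (asc b a (ten y x) ∘ asc (ten b a) y x) ∘ asci (ten b a) y x).
  - rewrite pentagon. lassoc.
    rewrite (precmp_eq (eq_sym (tenm_cmp_r _ _ _))), asc_iso1, tenm_id, cmp_idl, ascK.
    reflexivity.
  - lassoc. rewrite asc_iso2, cmp_idr. reflexivity.
Qed.

Lemma pentagon_asci_asc (b y a x : ob V) :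
  asc (ten b y) a x ∘ (asci b y a ⊗ idm x) ∘ asci b (ten y a) x
  = asci b y (ten a x) ∘ (idm b ⊗ asc y a x).
Proof.
  transitivity (asci b y (ten a x) ∘ (asc b y (ten a x) ∘ asc (ten b y) a x)
                ∘ (asci b y a ⊗ idm x) ∘ asci b (ten y a) x).
  - lassoc. rewrite ascK. reflexivity.
  - rewrite pentagon. lassoc.
    rewrite (precmp_eq (eq_sym (tenm_cmp_l _ _ _))), asc_iso2, tenm_id, cmp_idl,
      asc_iso2, cmp_idr.
    reflexivity.
Qed.

Definition swap_front (b c d : ob V) : hom (ten b (ten c d)) (ten c (ten b d)) :=
  asc c b d ∘ (sy b c ⊗ idm d) ∘ asci b c d.

Definition middle_four (a b c d : ob V) :
    hom (ten (ten a b) (ten c d)) (ten (ten a c) (ten b d)) :=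
  asci a c (ten b d) ∘ (idm a ⊗ swap_front b c d) ∘ asc a b (ten c d).

Lemma sy_swap_front (b x y : ob V) :
  sy x (ten b y) ∘ swap_front b x y = asci b y x ∘ (idm b ⊗ sy x y).
Proof.
  unfold swap_front. rewrite sy_ten_r. lassoc.
  rewrite ascK, sy_tenm_lK, asc_iso2, cmp_idr. reflexivity.
Qed.

Lemma middle_four_sy (a b x y : ob V) :
  middle_four b a y x ∘ (sy a b ⊗ sy x y) = sy (ten a x) (ten b y) ∘ middle_four a b x y.
Proof.
  unfold middle_four. rewrite sy_ten_l. lassoc. rewrite asciK.
  rewrite (precmp_eq (eq_sym (tenm_cmp_r _ _ _))), sy_swap_front, tenm_cmp_r. lassoc.
  rewrite <- asc_nat, tenm_id, sy_ten_r, !tenm_cmp_l. lassoc.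
  rewrite (precmp_eq3 (pentagon_asci _ _ _ _)), ascK.
  rewrite <- (precmp_eq2 (asci_nat _ _ _)), tenm_id, <- tenm_lr.
  rewrite (precmp_eq2 (pentagon_asc_asci _ _ _ _)). lassoc.
  rewrite <- (precmp_eq2 (asci_nat _ _ _)), (precmp_eq3 (pentagon_asci_asc _ _ _ _)).
  unfold swap_front. rewrite !tenm_cmp_r. lassoc. reflexivity.
Qed.

Lemma middle_four_sy_l (a b x y : ob V) :
  middle_four b a y x ∘ (sy a b ⊗ idm (ten y x))
  = sy (ten a x) (ten b y) ∘ middle_four a b x y ∘ (idm (ten a b) ⊗ sy y x).
Proof.
  transitivity (middle_four b a y x ∘ (sy a b ⊗ sy x y) ∘ (idm (ten a b) ⊗ sy y x)).
  - rewrite <- tenm_cmp, cmp_idr, sy_inv. reflexivity.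
  - rewrite cmp_assoc, middle_four_sy. lassoc. reflexivity.
Qed.

Lemma cur_nat (z c a b : ob V) (f : hom (ten c a) b) (g : hom z c) :
  cur f ∘ g = cur (f ∘ (g ⊗ idm a)).
Proof. rewrite <- (cur_ev (cur f ∘ g)), tenm_cmp_l, cmp_assoc, ev_cur. reflexivity. Qed.

Lemma cur_inj (c a b : ob V) (f g : hom (ten c a) b) : cur f = cur g -> f = g.
Proof. intro E. rewrite <- (ev_cur f), <- (ev_cur g), E. reflexivity. Qed.

Lemma idm_cur (a b : ob V) : idm (ihom a b) = cur (ev a b).
Proof. rewrite <- (cur_ev (idm (ihom a b))), tenm_id, cmp_idr. reflexivity. Qed.

Lemma uvc_cur (P Q a b c : ob V) (f : hom (ten P b) c) (g : hom (ten Q a) b) :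
  uvc a b c ∘ (cur f ⊗ cur g) = cur (f ∘ (idm P ⊗ g) ∘ asc P Q a).
Proof.
  unfold uvc. rewrite cur_nat. f_equal. lassoc.
  rewrite asc_nat, (precmp_eq (eq_sym (tenm_cmp _ _ _ _))), cmp_idl, ev_cur.
  rewrite (tenm_lr (cur f) g). lassoc. rewrite (precmp_eq (ev_cur f)). reflexivity.
Qed.

Lemma iso_idm (a : ob V) : is_iso (idm a).
Proof. exists (idm a). rewrite cmp_idl. split; reflexivity. Qed.

Lemma iso_cmp (a b c : ob V) (g : hom b c) (f : hom a b) :
  is_iso f -> is_iso g -> is_iso (g ∘ f).
Proof.
  intros [fi [Ef1 Ef2]] [gi [Eg1 Eg2]]. exists (fi ∘ gi). split.
  - rewrite cmp_assoc, <- (cmp_assoc g gi fi), Eg1, cmp_idr. exact Ef1.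
  - rewrite cmp_assoc, <- (cmp_assoc fi f g), Ef2, cmp_idr. exact Eg2.
Qed.

Lemma iso_ten (a b c d : ob V) (f : hom a b) (g : hom c d) :
  is_iso f -> is_iso g -> is_iso (f ⊗ g).
Proof.
  intros [fi [Ef1 Ef2]] [gi [Eg1 Eg2]]. exists (fi ⊗ gi).
  rewrite <- !tenm_cmp, Ef1, Ef2, Eg1, Eg2, !tenm_id. split; reflexivity.
Qed.

Lemma iso_asc (a b c : ob V) : is_iso (asc a b c).
Proof. exists (asci a b c). split; [apply asc_iso1 | apply asc_iso2]. Qed.

Lemma iso_asci (a b c : ob V) : is_iso (asci a b c).
Proof. exists (asc a b c). split; [apply asc_iso2 | apply asc_iso1]. Qed.

Lemma iso_sy (a b : ob V) : is_iso (sy a b).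
Proof. exists (sy b a). split; apply sy_inv. Qed.

Lemma iso_ru (a : ob V) : is_iso (ru a).
Proof. exists (rui a). split; [apply ru_iso1 | apply ru_iso2]. Qed.

Lemma iso_middle_four (a b c d : ob V) : is_iso (middle_four a b c d).
Proof.
  unfold middle_four, swap_front.
  repeat apply iso_cmp; repeat apply iso_ten;
    auto using iso_idm, iso_cmp, iso_asc, iso_asci, iso_sy, iso_ten.
Qed.

Lemma iso_cancel_r (a b c : ob V) (s : hom a b) (f g : hom b c) :
  is_iso s -> f ∘ s = g ∘ s -> f = g.
Proof.
  intros [si [Es1 Es2]] E.
  rewrite <- (cmp_idr f), <- (cmp_idr g), <- Es2, !cmp_assoc, E. reflexivity.
Qed.

Lemma cur_uvc_iso (v c d x : ob V) (e : hom (ten v c) d) :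
  is_iso e -> is_iso (cur (uvc c d x ∘ (idm (ihom d x) ⊗ cur e))).
Proof.
  intros [ei [Ee1 Ee2]].
  assert (Hasci : forall (a : ob V) (f : hom a (ihom v (ihom c x))),
             asci _ v c ∘ (f ⊗ idm (ten v c)) = ((f ⊗ idm v) ⊗ idm c) ∘ asci a v c).
  { intros a f. rewrite <- asci_nat, tenm_id. reflexivity. }
  rewrite (idm_cur d x), uvc_cur.
  set (M := cur (cur (ev d x ∘ (idm (ihom d x) ⊗ e) ∘ asc (ihom d x) v c))).
  exists (cur (ev c x ∘ (ev v (ihom c x) ⊗ idm c) ∘ asci (ihom v (ihom c x)) v c
               ∘ (idm _ ⊗ ei))).
  split.
  - rewrite cur_nat. lassoc. rewrite <- tenm_interchange.
    rewrite (precmp_eq2 (Hasci _ _)), (precmp_eq (eq_sym (tenm_cmp_l _ _ _))).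
    unfold M. rewrite ev_cur, (precmp_eq (ev_cur _)). lassoc.
    rewrite asciK, <- tenm_cmp_r, Ee2, tenm_id, cmp_idr, <- idm_cur. reflexivity.
  - unfold M. rewrite !cur_nat. lassoc.
    rewrite asc_nat, tenm_id, <- (precmp_eq2 (tenm_interchange _ _)),
      (precmp_eq (ev_cur _)).
    lassoc.
    rewrite (precmp_eq (eq_sym (tenm_cmp_r _ _ _))), Ee1, tenm_id, cmp_idl, asc_iso1,
      cmp_idr, cur_ev, <- idm_cur.
    reflexivity.
Qed.
End MonoidalCoherence.

Lemma cur_iso_cotensor_Jop (V : SMCC) (Jr : Arities V) (v c d : Job Jr)
    (e : hom (ten (proj1_sig v) (proj1_sig c)) (proj1_sig d)) :
  is_iso e -> @is_cotensor V (Jop Jr) (proj1_sig v) c d (cur e).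
Proof. intros He x. unfold cotmap. cbn. lassoc. rewrite syK. apply cur_uvc_iso, He. Qed.

Section TheoryCalculus.
Variable V : SMCC.
Variable Jr : Arities V.
Variable U : JTheory Jr.
Local Notation hU := (thh U).
Local Notation Jb := (Job Jr).
Local Notation car := (@proj1_sig _ _).

Definition gcomp (a b c : Jb) (W Z : ob V) (g : hom W (hU b c)) (f : hom Z (hU a b)) :
  hom (ten W Z) (hU a c) := thc U a b c ∘ (g ⊗ f).

Definition counitI (n : Jb) : hom (car n) (hU n (jI Jr)) :=
  tau U n (jI Jr) ∘ cur (ru (car n)).

Lemma gcompA (a b c d : Jb) (W Z Y : ob V) (h : hom W (hU c d)) (g : hom Z (hU b c))
    (f : hom Y (hU a b)) :
  gcomp (gcomp h g) f = gcomp h (gcomp g f) ∘ asc W Z Y.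
Proof.
  destruct (th_vcat U) as [HA _]. cbn in HA. unfold gcomp.
  transitivity (thc U a b d ∘ (thc U b c d ⊗ idm _) ∘ ((h ⊗ g) ⊗ f)).
  - rewrite <- tenm_cmp, cmp_idl. reflexivity.
  - rewrite cmp_assoc, HA. lassoc.
    rewrite asc_nat, (precmp_eq (eq_sym (tenm_cmp _ _ _ _))), cmp_idl. reflexivity.
Qed.

Lemma gcompA_asci (a b c d : Jb) (W Z Y : ob V) (h : hom W (hU c d))
    (g : hom Z (hU b c)) (f : hom Y (hU a b)) :
  gcomp h (gcomp g f) = gcomp (gcomp h g) f ∘ asci W Z Y.
Proof. rewrite gcompA. lassoc. rewrite asc_iso2, cmp_idr. reflexivity. Qed.

Lemma gcomp_cmp (a b c : Jb) (W Z W' Z' : ob V) (g : hom W (hU b c)) (f : hom Z (hU a b))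
    (s : hom W' W) (t : hom Z' Z) :
  gcomp (g ∘ s) (f ∘ t) = gcomp g f ∘ (s ⊗ t).
Proof. unfold gcomp. rewrite tenm_cmp. lassoc. reflexivity. Qed.

Lemma gcomp_cmpl (a b c : Jb) (W Z W' : ob V) (g : hom W (hU b c)) (f : hom Z (hU a b))
    (s : hom W' W) :
  gcomp (g ∘ s) f = gcomp g f ∘ (s ⊗ idm Z).
Proof. rewrite <- gcomp_cmp, cmp_idr. reflexivity. Qed.

Lemma gcomp_cmpr (a b c : Jb) (W Z Z' : ob V) (g : hom W (hU b c)) (f : hom Z (hU a b))
    (t : hom Z' Z) :
  gcomp g (f ∘ t) = gcomp g f ∘ (idm W ⊗ t).
Proof. rewrite <- gcomp_cmp, cmp_idr. reflexivity. Qed.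

Lemma gcomp_tau (a b c : Jb) (P Q : ob V) (y : hom P (vh (Jop Jr) b c))
    (x : hom Q (vh (Jop Jr) a b)) :
  gcomp (tau U b c ∘ y) (tau U a b ∘ x) = tau U a c ∘ (vc (Jop Jr) a b c ∘ (y ⊗ x)).
Proof.
  destruct (th_tau_fun U) as [Htau _]. cbn in Htau. unfold gcomp.
  rewrite tenm_cmp. lassoc. rewrite (precmp_eq2 (Htau a b c)). reflexivity.
Qed.

Lemma cotmap_cmp (v : ob V) (c d x : Jb) (e : hom v (hU d c)) (Z : ob V)
    (f : hom Z (hU x d)) :
  @cotmap V (thD U) v c d e x ∘ f = cur (gcomp e f ∘ sy Z v).
Proof.
  unfold cotmap. rewrite cur_nat. f_equal. cbn. unfold gcomp. lassoc.
  rewrite <- tenm_rl, sy_nat. reflexivity.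
Qed.

Lemma cotensor_gcomp_inj (v : ob V) (c d x : Jb) (e : hom v (hU d c)) (Z : ob V)
    (f g : hom Z (hU x d)) :
  @is_cotensor V (thD U) v c d e -> gcomp e f = gcomp e g -> f = g.
Proof.
  intros He E. destruct (He x) as [m [Em _]].
  transitivity (m ∘ (@cotmap V (thD U) v c d e x ∘ f)).
  - rewrite cmp_assoc, Em, cmp_idl. reflexivity.
  - rewrite !cotmap_cmp, E, <- cotmap_cmp, cmp_assoc, Em, cmp_idl. reflexivity.
Qed.

Lemma cotmap_surj (v : ob V) (c' d' : Jb) (e' : hom v (hU d' c')) :
  @is_cotensor V (thD U) v c' d' e' ->
  forall (c d : Jb) R, exists L : hom (hU c c') (hU d d'),
    @cotmap V (thD U) v c' d' e' d ∘ L = R.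
Proof.
  intros He c d R. destruct (He d) as [m [_ Em]]. exists (m ∘ R).
  rewrite cmp_assoc, Em, cmp_idl. reflexivity.
Qed.

Lemma induced_gcomp (v : ob V) (c d c' d' : Jb) (e : hom v (hU d c))
    (e' : hom v (hU d' c')) L :
  @induced V (thD U) v c d e c' d' e' L ->
  forall Z (f : hom Z (hU c c')), gcomp e' (L ∘ f) = gcomp f e ∘ sy v Z.
Proof.
  unfold induced. intros HL Z f.
  assert (Hcur : cur (gcomp e' (L ∘ f) ∘ sy Z v) = cur (gcomp f e)).
  { rewrite <- cotmap_cmp, cmp_assoc, HL, cur_nat. f_equal. cbn. unfold gcomp.
    lassoc. rewrite <- tenm_cmp, cmp_idl, cmp_idr. reflexivity. }
  apply cur_inj in Hcur. rewrite <- Hcur. lassoc. rewrite sy_inv, cmp_idr. reflexivity.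
Qed.

Lemma cotensor_cl (j K : Jb) : @is_cotensor V (thD U) (car j) K (jten j K) (cl U j K).
Proof. apply (th_tau_cot (j := U)), cur_iso_cotensor_Jop, iso_idm. Qed.

Lemma cotensor_cr (j K : Jb) : @is_cotensor V (thD U) (car j) K (jten K j) (cr U j K).
Proof. apply (th_tau_cot (j := U)), cur_iso_cotensor_Jop, iso_sy. Qed.

Lemma cotensor_counitI (n : Jb) : @is_cotensor V (thD U) (car n) (jI Jr) n (counitI n).
Proof. apply (th_tau_cot (j := U)), cur_iso_cotensor_Jop, iso_ru. Qed.

Lemma lift_l_ex (j K K' : Jb) : exists L, @lift_l V Jr U j K K' L.
Proof. apply (cotmap_surj (cotensor_cl j K')). Qed.

Lemma lift_r_ex (j K K' : Jb) : exists L, @lift_r V Jr U j K K' L.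
Proof. apply (cotmap_surj (cotensor_cr j K')). Qed.

Lemma lift_l_gcomp (j K K' : Jb) L : @lift_l V Jr U j K K' L ->
  forall Z (f : hom Z (hU K K')), gcomp (cl U j K') (L ∘ f) = gcomp f (cl U j K) ∘ sy (car j) Z.
Proof. apply induced_gcomp. Qed.

Lemma lift_r_gcomp (j K K' : Jb) L : @lift_r V Jr U j K K' L ->
  forall Z (f : hom Z (hU K K')), gcomp (cr U j K') (L ∘ f) = gcomp f (cr U j K) ∘ sy (car j) Z.
Proof. apply induced_gcomp. Qed.

Lemma counitI_cl_cr (a b : Jb) :
  gcomp (counitI b) (cl U a b) = gcomp (counitI a) (cr U b a) ∘ sy (car b) (car a).
Proof.
  unfold counitI, cl, cr. rewrite !gcomp_tau. cbn. lassoc.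
  rewrite !(precmp_eq2 (sy_nat _ _)), !(precmp_eq (uvc_cur _ _)), sy_nat,
    (precmp_eq (uvc_cur _ _)), sy_inv, cmp_idr.
  f_equal. rewrite cmp_idl, cur_nat, !kelly_ru, ru_nat. reflexivity.
Qed.

Lemma counitI_unt (n : Jb) :
  gcomp (counitI (jI Jr)) (counitI n) = counitI n ∘ (ru (car n) ∘ sy unt (car n)).
Proof.
  unfold counitI. rewrite !gcomp_tau. cbn. lassoc.
  rewrite sy_nat, (precmp_eq (uvc_cur _ _)), kelly_ru, (precmp_eq (cur_nat _ _)), ru_nat.
  reflexivity.
Qed.

Lemma cotensor2_gcomp_inj (a b c : Jb) (Z : ob V) (f g : hom Z (hU a (jten b c))) :
  gcomp (gcomp (counitI c) (cl U b c)) f = gcomp (gcomp (counitI c) (cl U b c)) g -> f = g.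
Proof.
  rewrite !gcompA. intro E. apply iso_cancel_r in E; [|apply iso_asc].
  apply (cotensor_gcomp_inj (cotensor_counitI c)) in E.
  exact (cotensor_gcomp_inj (cotensor_cl b c) E).
Qed.

Lemma gcomp4_exchange (m o n y k x : Jb) (P Q W Z : ob V) (p : hom P (hU m o))
    (q : hom Q (hU n m)) (g : hom W (hU y n)) (f : hom Z (hU x y))
    (g0 : hom W (hU k m)) (q0 : hom Q (hU y k)) :
  gcomp q g = gcomp g0 q0 ∘ sy Q W ->
  gcomp (gcomp p q) (gcomp g f) = gcomp (gcomp p g0) (gcomp q0 f) ∘ middle_four P Q W Z.
Proof.
  intro E.
  rewrite (gcompA p q (gcomp g f)), (gcompA_asci q g f), E, gcomp_cmpl, (gcompA g0 q0 f).
  lassoc. rewrite gcomp_cmpr, (gcompA_asci p g0 (gcomp q0 f)).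
  unfold middle_four, swap_front. lassoc. rewrite !tenm_cmp_r. lassoc. reflexivity.
Qed.

Lemma gcomp3_exchange (m o n k x l : Jb) (A B Z : ob V) (p : hom A (hU m o))
    (q : hom B (hU n m)) (p' : hom B (hU k o)) (q' : hom A (hU n k))
    (g : hom Z (hU x n)) (g0 : hom Z (hU l k)) (q0 : hom A (hU x l)) :
  gcomp p q = gcomp p' q' ∘ sy A B -> gcomp q' g = gcomp g0 q0 ∘ sy A Z ->
  gcomp p (gcomp q g) = gcomp (gcomp p' g0) q0 ∘ sy A (ten B Z).
Proof.
  intros E1 E2.
  rewrite (gcompA_asci p q g), E1, gcomp_cmpl, (gcompA p' q' g), E2. lassoc.
  rewrite gcomp_cmpr, (gcompA_asci p' g0 q0), sy_ten_r. lassoc. reflexivity.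
Qed.

Lemma counitI_lift_r (J J' K : Jb) (X : ob V) (mu : hom X (hU J J')) L :
  @lift_r V Jr U K J J' L ->
  gcomp (counitI K) (gcomp (cl U J' K) (L ∘ mu))
  = gcomp (gcomp (counitI J') mu) (cr U K J) ∘ sy (car K) (ten (car J') X).
Proof. intro HL. eapply gcomp3_exchange; [apply counitI_cl_cr | apply (lift_r_gcomp HL mu)]. Qed.

Lemma counitI_lift_l (J K K' : Jb) (Y : ob V) (nu : hom Y (hU K K')) L :
  @lift_l V Jr U J K K' L ->
  gcomp (counitI J) (gcomp (cr U K' J) (L ∘ nu))
  = gcomp (gcomp (counitI K') nu) (cl U J K) ∘ sy (car J) (ten (car K') Y).
Proof.
  intro HL. eapply gcomp3_exchange; [ | apply (lift_l_gcomp HL nu)].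
  rewrite (counitI_cl_cr J K'). lassoc. rewrite sy_inv, cmp_idr. reflexivity.
Qed.

Section Kronecker.
Variables (J J' K K' : Jb) (X Y : ob V) (mu : hom X (hU J J')) (nu : hom Y (hU K K')).
Variables (Lr : hom (hU J J') (hU (jten J K) (jten J' K)))
          (Ll : hom (hU K K') (hU (jten J' K) (jten J' K')))
          (Lr' : hom (hU J J') (hU (jten J K') (jten J' K')))
          (Ll' : hom (hU K K') (hU (jten J K) (jten J K'))).
Hypotheses (HLl : lift_l Ll) (HLr' : lift_r Lr').

Let kron1 := cmp (cmp (thc U (jten J K) (jten J' K) (jten J' K'))
                      (cmp (sy _ _) (tenm Lr Ll))) (tenm mu nu).
Let kron2 := cmp (cmp (thc U (jten J K) (jten J K') (jten J' K')) (tenm Lr' Ll'))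
                 (tenm mu nu).
Let counitJK := gcomp (counitI K') (cl U J' K').

Lemma counit_kron1 :
  gcomp counitJK kron1
  = gcomp (gcomp (counitI K') nu) (gcomp (cl U J' K) (Lr ∘ mu))
    ∘ middle_four (car K') (car J') Y X ∘ (idm _ ⊗ sy X Y).
Proof.
  assert (Ekron : kron1 = gcomp (Ll ∘ nu) (Lr ∘ mu) ∘ sy X Y).
  { unfold kron1, gcomp. lassoc. rewrite <- tenm_cmp, sy_nat. reflexivity. }
  rewrite Ekron, gcomp_cmpr. unfold counitJK.
  rewrite (gcomp4_exchange (counitI K') (Lr ∘ mu) (lift_l_gcomp HLl nu)). lassoc.
  reflexivity.
Qed.

Lemma counit_kron2 :
  gcomp counitJK kron2
  = gcomp (gcomp (counitI J') mu) (gcomp (cr U K' J) (Ll' ∘ nu))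
    ∘ middle_four (car J') (car K') X Y ∘ (sy (car K') (car J') ⊗ idm _).
Proof.
  assert (Ekron : kron2 = gcomp (Lr' ∘ mu) (Ll' ∘ nu)).
  { unfold kron2, gcomp. lassoc. rewrite <- tenm_cmp. reflexivity. }
  rewrite Ekron. unfold counitJK.
  rewrite (counitI_cl_cr J' K'), gcomp_cmpl,
    (gcomp4_exchange (counitI J') (Ll' ∘ nu) (lift_r_gcomp HLr' mu)).
  lassoc. reflexivity.
Qed.

(* counitJK is jointly monic, and after composing with it the two Kronecker
   products agree up to the isomorphism middle_four o (1 (x) sy). *)
Lemma kron_eq_iff_counit_eq :
  kron1 = kron2 <->
  gcomp (gcomp (counitI K') nu) (gcomp (cl U J' K) (Lr ∘ mu))
  = gcomp (gcomp (counitI J') mu) (gcomp (cr U K' J) (Ll' ∘ nu)) ∘ sy _ _.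
Proof.
  pose proof counit_kron1 as E1. pose proof counit_kron2 as E2.
  rewrite middle_four_sy_l in E2.
  split.
  - intro E. rewrite E in E1.
    apply (iso_cancel_r (s := middle_four (car K') (car J') Y X ∘ (idm _ ⊗ sy X Y))).
    + apply iso_cmp; [apply iso_ten; [apply iso_idm | apply iso_sy] | apply iso_middle_four].
    + lassoc. rewrite <- E1, <- E2. reflexivity.
  - intro E. apply cotensor2_gcomp_inj. fold counitJK.
    rewrite E1, E2, E. lassoc. reflexivity.
Qed.
End Kronecker.

Definition unt_absorb (n : Jb) (Z : ob V) : hom (ten unt (ten (car n) Z)) (ten (car n) Z) :=
  ((ru (car n) ∘ sy unt (car n)) ⊗ idm Z) ∘ asci unt (car n) Z.

Lemma iso_unt_absorb (n : Jb) (Z : ob V) : is_iso (unt_absorb n Z).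
Proof. unfold unt_absorb. auto using iso_cmp, iso_asci, iso_ten, iso_sy, iso_ru, iso_idm. Qed.

Lemma counitI_unt_gcomp (a n : Jb) (Z : ob V) (f : hom Z (hU a n)) :
  gcomp (counitI (jI Jr)) (gcomp (counitI n) f) = gcomp (counitI n) f ∘ unt_absorb n Z.
Proof.
  rewrite gcompA_asci, counitI_unt, gcomp_cmpl. unfold unt_absorb. lassoc. reflexivity.
Qed.

Lemma commutes_of_counitI (J J' K K' : Jb) (X Y : ob V) (mu : hom X (hU J J'))
    (nu : hom Y (hU K K')) :
  commutes (gcomp (counitI J') mu) (gcomp (counitI K') nu) -> commutes mu nu.
Proof.
  intros HC Lr Ll Lr' Ll' HLr HLl HLr' HLl'.
  apply (proj2 (kron_eq_iff_counit_eq mu nu Lr Ll' HLl HLr')).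
  destruct (lift_r_ex K J (jI Jr)) as [Lr0 HLr0].
  destruct (lift_l_ex (jI Jr) K (jI Jr)) as [Ll0 HLl0].
  destruct (lift_r_ex (jI Jr) J (jI Jr)) as [Lr0' HLr0'].
  destruct (lift_l_ex J K (jI Jr)) as [Ll0' HLl0'].
  pose proof (HC Lr0 Ll0 Lr0' Ll0' HLr0 HLl0 HLr0' HLl0') as H0.
  apply (proj1 (kron_eq_iff_counit_eq _ _ Lr0 Ll0' HLl0 HLr0')) in H0.
  rewrite !counitI_unt_gcomp in H0.
  set (mu' := gcomp (counitI J') mu) in *. set (nu' := gcomp (counitI K') nu) in *.
  assert (Emu : gcomp (cl U (jI Jr) K) (Lr0 ∘ mu')
                = gcomp (cl U J' K) (Lr ∘ mu) ∘ unt_absorb J' X).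
  { apply (cotensor_gcomp_inj (cotensor_counitI K)).
    rewrite (counitI_lift_r mu' HLr0). unfold mu'.
    rewrite counitI_unt_gcomp, gcomp_cmpr, (counitI_lift_r mu HLr), gcomp_cmpl. lassoc.
    rewrite sy_nat. reflexivity. }
  assert (Enu : gcomp (cr U (jI Jr) J) (Ll0' ∘ nu')
                = gcomp (cr U K' J) (Ll' ∘ nu) ∘ unt_absorb K' Y).
  { apply (cotensor_gcomp_inj (cotensor_counitI J)).
    rewrite (counitI_lift_l nu' HLl0'). unfold nu'.
    rewrite counitI_unt_gcomp, gcomp_cmpr, (counitI_lift_l nu HLl'), gcomp_cmpl. lassoc.
    rewrite sy_nat. reflexivity. }
  rewrite Emu, Enu, !gcomp_cmp in H0.
  apply (iso_cancel_r (s := unt_absorb K' Y ⊗ unt_absorb J' X)).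
  - apply iso_ten; apply iso_unt_absorb.
  - rewrite H0. lassoc. rewrite sy_nat. reflexivity.
Qed.
End TheoryCalculus.

Lemma commutes_precmp (V : SMCC) (Jr : Arities V) (U : JTheory Jr) (X Y X' Y' : ob V)
    (J J' K K' : Job Jr) (f : hom X (thh U J J')) (g : hom Y (thh U K K'))
    (s : hom X' X) (t : hom Y' Y) :
  commutes f g -> commutes (f ∘ s) (g ∘ t).
Proof.
  intros H Lr Ll Lr' Ll' HLr HLl HLr' HLl'.
  rewrite tenm_cmp, cmp_assoc, (H _ _ _ _ HLr HLl HLr' HLl'), cmp_assoc. reflexivity.
Qed.

Lemma counitI_mor (V : SMCC) (Jr : Arities V) (T U : JTheory Jr) (A : JMor T U)
    (J J' : Job Jr) :
  gcomp (counitI U J') (mor A J J')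
  = mor A J (jI Jr) ∘ (thc T J J' (jI Jr) ∘ (counitI T J' ⊗ idm _)).
Proof.
  unfold gcomp, counitI. rewrite <- (mor_tau A J' (jI Jr)).
  destruct (mor_fun A) as [HA _]. cbn in HA.
  rewrite cmp_assoc, HA, <- (cmp_assoc (tenm _ (idm _))), <- tenm_cmp, cmp_idr, cmp_assoc.
  reflexivity.
Qed.

Theorem theorem9p2 (V : SMCC) (Jr : Arities V) (T S U : JTheory Jr)
    (A : JMor T U) (B : JMor S U) :
  mor_commute A B <->
  (forall J K : Job Jr, commutes (mor A J (jI Jr)) (mor B K (jI Jr))).
Proof.
  split.
  - intros H J K. apply H.
  - intros H J J' K K'. apply commutes_of_counitI.
    rewrite (counitI_mor A), (counitI_mor B). apply commutes_precmp, H.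
Qed.
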